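(* Let $K_{1,n}$ be the star graph with $n+1$ vertices and $n$ edges. Then $\mathcal{P}_d(\mathcal{E}_{K_{1,n}})=\emptyset$ for every $d\geq n+1$.
   Context: Work over an algebraically closed field $k$. The Fomin–Kirillov algebra $\mathcal{E}_m$ is the graded $k$-algebra generated by degree-$1$ elements $x_{ij}$, $1\leq i<j\leq m$, subject to: $x_{ij}^2=0$; $x_{ij}x_{kl}=x_{kl}x_{ij}$ whenever $\{i,j\}\cap\{k,l\}=\emptyset$; $x_{ij}x_{jk}-x_{jk}x_{ik}-x_{ik}x_{ij}=0$ and $x_{jk}x_{ij}-x_{ik}x_{jk}-x_{ij}x_{ik}=0$ for $i<j<k$. For a graph $G$ on vertex set $\{1,\dots,m\}$, $\mathcal{E}_G$ is the subalgebra of $\mathcal{E}_m$ generated by the $x_{ij}$ with $\{i,j\}$ an edge of $G$; here $K_{1,n}$ is viewed as a graph on $n+1$ labelled vertices (one centre joined to the other $n$). A degree-$d$ truncated point module over a connected graded algebra $A$ generated in degree $1$ is a graded cyclic module generated in degree $0$ with Hilbert series $1+t+\cdots+t^d$; $\mathcal{P}_d(A)$ is the space of such modules. *)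

From HB Require Import structures.
From mathcomp Require Import all_boot all_order all_algebra.
Set Implicit Arguments. Unset Strict Implicit. Unset Printing Implicit Defensive.
Import GRing.Theory.
Local Open Scope ring_scope.

(* Generators x_{ij} of the Fomin--Kirillov algebra E_m, 1 <= i < j <= m,
   are indexed (0-based) by pairs (i,j) of 'I_m with i < j. *)
Definition gen (m : nat) := {p : 'I_m * 'I_m | (p.1 < p.2)%N}.

(* Elements of the free algebra k<x_{ij}> as formal finite sums of
   (coefficient, word); the word [:: v1; ...; vr] stands for v1 v2 ... vr. *)
Definition ncpoly (k : closedFieldType) (m : nat) := seq (k * seq (gen m)).

Definition nccoef (k : closedFieldType) (m : nat) (f : ncpoly k m)
  (w : seq (gen m)) : k :=
  \sum_(t <- f) (if t.2 == w then t.1 else 0).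

Definition ncsandwich (k : closedFieldType) (m : nat) (a : seq (gen m))
  (r : ncpoly k m) (b : seq (gen m)) : ncpoly k m :=
  [seq (u.1, a ++ u.2 ++ b) | u <- r].

Definition FK_rel (k : closedFieldType) (m : nat) (r : ncpoly k m) : Prop :=
  (exists a : gen m, r = [:: (1, [:: a; a])])
  \/
  (exists a b : gen m,
      [/\ (val a).1 != (val b).1, (val a).1 != (val b).2,
          (val a).2 != (val b).1 & (val a).2 != (val b).2] /\
      r = [:: (1, [:: a; b]); (-1, [:: b; a])])
  \/
  (* for i<j<k, with a = x_ij, b = x_jk, c = x_ik:
       x_ij x_jk - x_jk x_ik - x_ik x_ij = 0 *)
  (exists a b c : gen m,
      [/\ (val a).2 = (val b).1, (val c).1 = (val a).1 & (val c).2 = (val b).2] /\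
      r = [:: (1, [:: a; b]); (-1, [:: b; c]); (-1, [:: c; a])])
  \/
  (exists a b c : gen m,
      [/\ (val a).2 = (val b).1, (val c).1 = (val a).1 & (val c).2 = (val b).2] /\
      r = [:: (1, [:: b; a]); (-1, [:: c; b]); (-1, [:: a; c])]).

(* f lies in the two-sided ideal I of k<x_{ij}> generated by the FK
   relations, i.e. f maps to 0 in E_m = k<x_{ij}>/I. *)
Definition in_FK_ideal (k : closedFieldType) (m : nat) (f : ncpoly k m) : Prop :=
  exists L : seq (k * seq (gen m) * ncpoly k m * seq (gen m)),
    (forall t, t \in L -> FK_rel t.1.2) /\
    forall w, nccoef f w =
      \sum_(t <- L) t.1.1.1 * nccoef (ncsandwich t.1.1.2 t.1.2 t.2) w.

(* A graph G on the vertex set {1..m} (0-based here) is given by its edge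
   set, a predicate on the generators (pairs i<j).  The subalgebra E_G of E_m
   generated by the x_e (e edge of G) is T(V_G)/J where
   J = { f in k<x_e : e in G> | f = 0 in E_m }.

   A graded cyclic E_G-module M generated in degree 0 with Hilbert series
   1 + t + ... + t^d has M_i = k m_i (0 <= i <= d).  As E_G is generated in
   degree 1, the module structure is given by the action of the degree-one
   generators: x_e m_i = lam i e m_{i+1} (i < d), x_e m_d = 0.
   The action of the word v1 ... vr on m_i is
   lam (i+r-1) v1 * ... * lam i vr * m_{i+r}  (and 0 if i + r > d). *)
Fixpoint word_act (k : closedFieldType) (m : nat) (lam : nat -> gen m -> k)
  (i : nat) (w : seq (gen m)) : k :=
  match w with
  | [::] => 1
  | v :: w' => lam (i + size w')%N v * word_act lam i w'
  end.

(* coefficient of m_{i + |w|} in f . m_i, summed over the terms of f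
   (terms pushing past degree d act by zero) *)
Definition ncpoly_act_at (k : closedFieldType) (m : nat) (d : nat)
  (lam : nat -> gen m -> k) (f : ncpoly k m) (i j : nat) : k :=
  \sum_(t <- f | size t.2 == j) (if (i + size t.2 <= d)%N then t.1 * word_act lam i t.2 else 0).

(* lam defines a degree-d truncated point module over E_G:
   (1) well-defined E_G-module: every element of J acts by zero
       (each homogeneous component of f . m_i vanishes);
   (2) cyclic, generated by M_0: each M_i (i <= d) equals (E_G)_i M_0, i.e.
       some word of length i in the edges of G maps m_0 to a nonzero
       multiple of m_i. *)
Definition is_truncated_point_module (k : closedFieldType) (m : nat)
  (G : pred (gen m)) (d : nat) (lam : nat -> gen m -> k) : Prop :=
  (forall f : ncpoly k m,
      (forall t, t \in f -> all G t.2) ->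
      in_FK_ideal f ->
      forall i j, ncpoly_act_at d lam f i j = 0)
  /\
  (forall i, (i <= d)%N ->
      exists w : seq (gen m), [/\ all G w, size w = i & word_act lam 0 w != 0]).

(* The star graph K_{1,n} on the n+1 vertices 'I_(n.+1), with centre 0:
   edges {0, j}, 1 <= j <= n. *)
Definition star_edges (n : nat) : pred (gen n.+1) :=
  fun x => (nat_of_ord (val x).1 == 0)%N.
Arguments star_edges n : clear implicits.

From HB Require Import structures.
From mathcomp Require Import all_boot all_order all_algebra.
From mathcomp Require Import ring zify.
Set Implicit Arguments. Unset Strict Implicit. Unset Printing Implicit Defensive.
Import GRing.Theory.
Local Open Scope ring_scope.

(* In E_{K_{1,n}} the cyclic sum of x_{c_j} ... x_{c_r} x_{c_1} ... x_{c_j} over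
   the rotations of a sequence c of distinct star edges vanishes: for one edge
   it is x_a^2, and the step from a M and M b to a M b rewrites every factor
   x_b x_a as +-(x_a x_r - x_r x_b), where r joins the leaves of a and b and
   commutes with all other star edges.
   In a truncated point module, x_e m_t = lam t e m_(t+1), and a word reaching
   m_d provides star edges U_t with lam t U_t <> 0 for t < d.  If a acts
   nontrivially at degrees i and i+g with g minimal, then a, U_(i+1), ...,
   U_(i+g-1) are distinct, and their cyclic sum applied to m_i keeps only the
   nonzero term x_a x_(U_(i+g-1)) ... x_(U_(i+1)) x_a, since every other term
   makes a act at a degree strictly between i and i+g.  So the U_t are d
   distinct edges of a star with n edges. *)

Lemma take_rcons (T : Type) i (s : seq T) x :
  (i <= size s)%N -> take i (rcons s x) = take i s.
Proof. by move=> le_is; rewrite -cats1 takel_cat. Qed.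

Section FKIdeal.
Variables (k : closedFieldType) (m : nat).
Local Notation word := (seq (gen m)).
Implicit Types (u v w : word) (phi psi chi : word -> k).

(* [in_FK_ideal f] is [fk_ideal (nccoef f)]: elements of the free algebra are
   handled as coefficient functions, on which linear combinations are pointwise. *)
Definition fk_ideal phi := exists L : seq (k * word * ncpoly k m * word),
  (forall t, t \in L -> FK_rel t.1.2) /\
  forall w, phi w = \sum_(t <- L) t.1.1.1 * nccoef (ncsandwich t.1.1.2 t.1.2 t.2) w.

Lemma fk_ideal_eq phi psi : phi =1 psi -> fk_ideal phi -> fk_ideal psi.
Proof. by move=> e [L [HL HE]]; exists L; split=> // w; rewrite -e. Qed.

Lemma fk_ideal0 : fk_ideal \0.
Proof. by exists [::]; split=> // w; rewrite big_nil. Qed.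

Lemma fk_idealD phi psi : fk_ideal phi -> fk_ideal psi -> fk_ideal (phi \+ psi).
Proof.
move=> [L1 [H1 E1]] [L2 [H2 E2]]; exists (L1 ++ L2); split.
  by move=> t; rewrite mem_cat => /orP [] ?; [apply: H1 | apply: H2].
by move=> w; rewrite big_cat /= E1 E2.
Qed.

Lemma fk_idealZ c phi : fk_ideal phi -> fk_ideal (c \*o phi).
Proof.
move=> [L [H E]]; exists [seq (c * t.1.1.1, t.1.1.2, t.1.2, t.2) | t <- L]; split.
  by move=> t /mapP [u uL ->] /=; apply: H.
by move=> w; rewrite big_map /= E mulr_sumr; apply: eq_bigr => t _; rewrite mulrA.
Qed.

Lemma fk_idealB phi psi : fk_ideal phi -> fk_ideal psi -> fk_ideal (phi \- psi).
Proof.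
move=> h1 h2; apply: fk_ideal_eq (fk_idealD h1 (fk_idealZ (-1) h2)) => w /=.
by rewrite mulN1r.
Qed.

Lemma fk_ideal_rel r : FK_rel r -> fk_ideal (nccoef r).
Proof.
move=> H; exists [:: (1, [::], r, [::])]; split=> [t|w].
  by rewrite inE => /eqP ->.
rewrite big_seq1 mul1r /ncsandwich; congr nccoef.
by elim: r {H} => //= -[c u] r <-; rewrite cats0.
Qed.

Definition unsandwich a b w : option word :=
  let u := take (size w - size a - size b) (drop (size a) w) in
  if w == a ++ u ++ b then Some u else None.

Lemma unsandwichP a b u w : (a ++ u ++ b == w) = (unsandwich a b w == Some u).
Proof.
rewrite /unsandwich; case: eqP => [<-|ne].
  have -> : (size (a ++ u ++ b) - size a - size b)%N = size u.
    by rewrite !size_cat; lia.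
  by rewrite drop_size_cat // take_size_cat // eqxx /=; case: eqP.
case: ifP => [/eqP e|_] //.
by apply/esym/eqP => -[e']; apply: ne; rewrite e e'.
Qed.

Definition sandwich a phi b : word -> k :=
  fun w => if unsandwich a b w is Some u then phi u else 0.

Lemma nccoef_sandwich a f b : nccoef (ncsandwich a f b) =1 sandwich a (nccoef f) b.
Proof.
move=> w; rewrite /nccoef /ncsandwich big_map /sandwich.
case E: (unsandwich a b w) => [u|]; last first.
  by apply: big1 => t _; rewrite unsandwichP E.
apply: eq_bigr => t _; rewrite unsandwichP E.
by case: eqP => [[->]|ne]; case: eqP => // e; case: ne; rewrite e.
Qed.

Lemma ncsandwich_cat a x (r : ncpoly k m) y b :
  ncsandwich (a ++ x) r (y ++ b) = ncsandwich a (ncsandwich x r y) b.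
Proof. by rewrite /ncsandwich -map_comp; apply: eq_map => u /=; rewrite !catA. Qed.

Lemma fk_ideal_sandwich a b phi : fk_ideal phi -> fk_ideal (sandwich a phi b).
Proof.
move=> [L [H E]]; exists [seq (t.1.1.1, a ++ t.1.1.2, t.1.2, t.2 ++ b) | t <- L].
split=> [t /mapP [u uL ->] /=|w]; first exact: H.
rewrite big_map /sandwich; case Ew: (unsandwich a b w) => [u|].
  rewrite E; apply: eq_bigr => t _.
  by rewrite ncsandwich_cat [in RHS]nccoef_sandwich /sandwich Ew.
by rewrite big1 // => t _; rewrite ncsandwich_cat nccoef_sandwich /sandwich Ew mulr0.
Qed.

Definition monomial v : word -> k := fun w => (v == w)%:R.

Lemma sandwich_monomial a v b : sandwich a (monomial v) b =1 monomial (a ++ v ++ b).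
Proof.
move=> w; rewrite /sandwich /monomial unsandwichP.
by case: (unsandwich a b w) => [u|] //=; rewrite eq_sym.
Qed.

Lemma sandwich_sum_monomial (I : Type) (r : seq I) (F : I -> word) a b :
  sandwich a (fun w => \sum_(i <- r) monomial (F i) w) b =1
  (fun w => \sum_(i <- r) monomial (a ++ F i ++ b) w).
Proof.
move=> w; rewrite -(eq_bigr _ (fun i _ => sandwich_monomial a (F i) b w)).
by rewrite /sandwich; case: unsandwich => //; rewrite big1.
Qed.

Lemma sandwich_combination a b s x y :
  sandwich a (s \*o (monomial x \- monomial y)) b =1
  s \*o (monomial (a ++ x ++ b) \- monomial (a ++ y ++ b)).
Proof.
move=> w; rewrite /= -!sandwich_monomial /sandwich.
by case: unsandwich => //=; rewrite subr0 mulr0.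
Qed.

Lemma eq_sandwich a b phi psi : phi =1 psi -> sandwich a phi b =1 sandwich a psi b.
Proof. by move=> e w; rewrite /sandwich; case: unsandwich. Qed.

Lemma sandwichD a b phi psi :
  sandwich a (phi \+ psi) b =1 sandwich a phi b \+ sandwich a psi b.
Proof. by move=> w; rewrite /sandwich /=; case: unsandwich; rewrite ?addr0. Qed.

Definition fk_equiv phi psi := fk_ideal (phi \- psi).

Lemma fk_equiv_eq phi phi' psi psi' :
  phi =1 phi' -> psi =1 psi' -> fk_equiv phi' psi' -> fk_equiv phi psi.
Proof. by move=> e1 e2; apply: fk_ideal_eq => w /=; rewrite e1 e2. Qed.

Lemma fk_equiv_refl phi psi : phi =1 psi -> fk_equiv phi psi.
Proof. by move=> e; apply: fk_ideal_eq fk_ideal0 => w /=; rewrite e subrr. Qed.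

Lemma fk_equiv_trans phi psi chi :
  fk_equiv phi psi -> fk_equiv psi chi -> fk_equiv phi chi.
Proof. by move=> h1 h2; apply: fk_ideal_eq (fk_idealD h1 h2) => w /=; rewrite subrKA. Qed.

Lemma fk_equivD phi1 phi2 psi1 psi2 : fk_equiv phi1 psi1 -> fk_equiv phi2 psi2 ->
  fk_equiv (phi1 \+ phi2) (psi1 \+ psi2).
Proof.
by move=> h1 h2; apply: fk_ideal_eq (fk_idealD h1 h2) => w /=; rewrite opprD addrACA.
Qed.

Lemma fk_equiv_sum (I : eqType) (r : seq I) (F G : I -> word -> k) :
  (forall i, i \in r -> fk_equiv (F i) (G i)) ->
  fk_equiv (fun w => \sum_(i <- r) F i w) (fun w => \sum_(i <- r) G i w).
Proof.
elim: r => [|i r IH] h; first by apply: fk_equiv_refl => w; rewrite !big_nil.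
apply: fk_equiv_eq (fun w => big_cons _ _ _ _ _ _) (fun w => big_cons _ _ _ _ _ _) _.
apply: fk_equivD (h i (mem_head _ _)) (IH _) => j jr.
by apply: h; rewrite inE jr orbT.
Qed.

Lemma fk_equiv_sandwich a b phi psi :
  fk_equiv phi psi -> fk_equiv (sandwich a phi b) (sandwich a psi b).
Proof.
move/(fk_ideal_sandwich a b); apply: fk_ideal_eq => w /=.
by rewrite /sandwich; case: unsandwich; rewrite ?subr0.
Qed.

Lemma fk_ideal_equiv phi psi : fk_equiv phi psi -> fk_ideal psi -> fk_ideal phi.
Proof. by move=> h1 h2; apply: fk_ideal_eq (fk_idealD h1 h2) => w /=; rewrite subrK. Qed.

Lemma fk_equiv_context a b u v : fk_equiv (monomial u) (monomial v) ->
  fk_equiv (monomial (a ++ u ++ b)) (monomial (a ++ v ++ b)).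
Proof.
by move/(fk_equiv_sandwich a b); apply: fk_equiv_eq => w; rewrite sandwich_monomial.
Qed.

Lemma fk_equiv_combination_context a b s u x y :
  fk_equiv (monomial u) (s \*o (monomial x \- monomial y)) ->
  fk_equiv (monomial (a ++ u ++ b))
           (s \*o (monomial (a ++ x ++ b) \- monomial (a ++ y ++ b))).
Proof.
move/(fk_equiv_sandwich a b); apply: fk_equiv_eq => w.
  by rewrite sandwich_monomial.
by rewrite sandwich_combination.
Qed.

Lemma nccoefE r : nccoef r =1 (fun w => \sum_(t <- r) t.1 * monomial t.2 w).
Proof.
by move=> w; apply: eq_bigr => t _; rewrite /monomial; case: eqP; rewrite ?mulr1 ?mulr0.
Qed.

Lemma fk_ideal_square p : fk_ideal (monomial [:: p; p]).
Proof.
apply: fk_ideal_eq (fk_ideal_rel (r := [:: (1, [:: p; p])]) _); last by left; exists p.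
by move=> w; rewrite nccoefE big_seq1 mul1r.
Qed.

Lemma fk_equiv_commute p q :
  [/\ (val p).1 != (val q).1, (val p).1 != (val q).2,
      (val p).2 != (val q).1 & (val p).2 != (val q).2] ->
  fk_equiv (monomial [:: p; q]) (monomial [:: q; p]).
Proof.
move=> disj; apply: fk_ideal_eq (fk_ideal_rel (r := [:: (1, [:: p; q]); (-1, [:: q; p])]) _).
  by move=> w /=; rewrite nccoefE !big_cons big_nil /=; ring.
by right; left; exists p, q.
Qed.

Lemma fk_equiv_triangle (ij jl il : gen m) :
  (val ij).2 = (val jl).1 -> (val il).1 = (val ij).1 -> (val il).2 = (val jl).2 ->
  fk_equiv (monomial [:: il; ij]) (monomial [:: ij; jl] \- monomial [:: jl; il]) /\
  fk_equiv (monomial [:: ij; il]) (monomial [:: jl; ij] \- monomial [:: il; jl]).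
Proof.
move=> j_eq i_eq l_eq; split.
  apply: fk_ideal_eq (fk_idealZ (-1) (fk_ideal_rel
    (r := [:: (1, [:: ij; jl]); (-1, [:: jl; il]); (-1, [:: il; ij])]) _)).
    by move=> w /=; rewrite nccoefE !big_cons big_nil /=; ring.
  by right; right; left; exists ij, jl, il.
apply: fk_ideal_eq (fk_idealZ (-1) (fk_ideal_rel
  (r := [:: (1, [:: jl; ij]); (-1, [:: il; jl]); (-1, [:: ij; il])]) _)).
  by move=> w /=; rewrite nccoefE !big_cons big_nil /=; ring.
by right; right; right; exists ij, jl, il.
Qed.

Lemma fk_equiv_commute_word r T :
  (forall z, z \in T -> fk_equiv (monomial [:: r; z]) (monomial [:: z; r])) ->
  fk_equiv (monomial (r :: T)) (monomial (T ++ [:: r])).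
Proof.
elim: T => [|z T IH] h; first exact: fk_equiv_refl.
apply: fk_equiv_trans (_ : fk_equiv _ (monomial (z :: r :: T))) _.
  exact: (fk_equiv_context [::] T (h z (mem_head _ _))).
have := fk_equiv_context [:: z] [::] (IH (fun t tT => h t (mem_behead (s := z :: T) tT))).
by rewrite /= !cats0.
Qed.

Definition cyclic_window (c : word) j := drop j c ++ take j.+1 c.

Definition cyclic_sum (c : word) : word -> k :=
  fun w => \sum_(0 <= j < size c) monomial (cyclic_window c j) w.

Lemma cyclic_sum_cons (a : gen m) M : cyclic_sum (a :: M) =1
  monomial (a :: M ++ [:: a]) \+
  (fun w => \sum_(0 <= i < size M) monomial (drop i M ++ a :: take i.+1 M) w).
Proof. by move=> w; rewrite /cyclic_sum /= big_nat_recl // /cyclic_window /= take0. Qed.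

Lemma cyclic_sum_rcons M (b : gen m) : cyclic_sum (rcons M b) =1
  (fun w => \sum_(0 <= i < size M) monomial (drop i M ++ b :: take i.+1 M) w) \+
  monomial (b :: M ++ [:: b]).
Proof.
move=> w; rewrite /cyclic_sum size_rcons big_nat_recr //=; congr (_ + _).
  apply: eq_big_nat => i /andP [_ iM].
  by rewrite /cyclic_window drop_rcons 1?ltnW // take_rcons // cat_rcons.
rewrite /cyclic_window drop_rcons // drop_size take_oversize ?size_rcons //.
by rewrite /= cats1.
Qed.

Section CyclicSumStep.
Variables (a b r : gen m) (M : word) (s : k).
Hypothesis swap_ba :
  fk_equiv (monomial [:: b; a]) (s \*o (monomial [:: a; r] \- monomial [:: r; b])).
Hypothesis r_commutes :
  forall z, z \in M -> fk_equiv (monomial [:: r; z]) (monomial [:: z; r]).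

Lemma r_commutes_sub T : {subset T <= M} ->
  fk_equiv (monomial (r :: T)) (monomial (T ++ [:: r])).
Proof. by move=> TM; apply: fk_equiv_commute_word => z /TM; apply: r_commutes. Qed.

Lemma cyclic_sum_step_ends :
  fk_equiv (monomial (a :: M ++ [:: b; a]) \+ monomial (b :: a :: M ++ [:: b]))
           (s \*o (monomial (a :: M ++ [:: a; r]) \- monomial (r :: b :: M ++ [:: b]))).
Proof.
have h0 := fk_equiv_combination_context (a :: M) [::] swap_ba.
have h1 := fk_equiv_combination_context [::] (M ++ [:: b]) swap_ba.
have hr := fk_equiv_context [:: a] [:: b] (r_commutes_sub (fun z zM => zM)).
rewrite /= ?cats0 -?catA in h0 h1 hr.
by apply: fk_ideal_eq (fk_idealD (fk_idealD h0 h1) (fk_idealZ s hr)) => w /=; ring.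
Qed.

Lemma cyclic_sum_step_window i :
  fk_equiv (monomial (drop i M ++ b :: a :: take i.+1 M))
    (s \*o (monomial (drop i M ++ a :: take i.+1 M ++ [:: r]) \-
            monomial (r :: drop i M ++ b :: take i.+1 M))).
Proof.
have hw := fk_equiv_combination_context (drop i M) (take i.+1 M) swap_ba.
have hl := fk_equiv_context (drop i M ++ [:: a]) [::]
  (r_commutes_sub (fun z => @mem_take i.+1 _ M z)).
have hr := fk_equiv_context [::] (b :: take i.+1 M)
  (r_commutes_sub (fun z => @mem_drop i _ M z)).
rewrite /= ?cats0 -?catA /= in hw hl hr.
apply: fk_ideal_eq (fk_idealD (fk_idealD hw (fk_idealZ s hl)) (fk_idealZ s hr)).
by move=> w /=; ring.
Qed.

Lemma cyclic_sum_step :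
  fk_equiv (cyclic_sum (a :: rcons M b))
    (s \*o (sandwich [::] (cyclic_sum (a :: M)) [:: r] \-
            sandwich [:: r] (cyclic_sum (rcons M b)) [::])).
Proof.
have windows : fk_equiv
    (fun w => \sum_(0 <= i < size M) monomial (drop i M ++ b :: a :: take i.+1 M) w)
    (fun w => \sum_(0 <= i < size M)
       (s \*o (monomial (drop i M ++ a :: take i.+1 M ++ [:: r]) \-
               monomial (r :: drop i M ++ b :: take i.+1 M))) w).
  by apply: fk_equiv_sum => i _; apply: cyclic_sum_step_window.
apply: fk_equiv_eq (fk_equivD cyclic_sum_step_ends windows) => w /=.
  rewrite cyclic_sum_cons /= size_rcons big_nat_recr //= cat_rcons.
  rewrite drop_rcons // drop_size take_oversize ?size_rcons // /= cats1.
  rewrite addrCA addrC; congr (_ + _); apply: eq_big_nat => i /andP [_ iM].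
  by rewrite drop_rcons 1?ltnW // take_rcons // cat_rcons.
rewrite (eq_sandwich _ _ (cyclic_sum_cons a M)) (eq_sandwich _ _ (cyclic_sum_rcons M b)).
rewrite !sandwichD /= !sandwich_sum_monomial !sandwich_monomial /= -catA cats0.
under eq_bigr => i _ do rewrite -catA.
under [X in _ - (X + _)]eq_bigr => i _ do rewrite cats0.
by rewrite -mulr_sumr sumrB; ring.
Qed.

End CyclicSumStep.

End FKIdeal.

Section StarGraph.
Variables (k : closedFieldType) (n : nat).
Local Notation word := (seq (gen n.+1)).
Local Notation star := (star_edges n).

Lemma star_edge_center z : star z -> val (val z).1 = 0%N.
Proof. by move/eqP. Qed.

Lemma star_edge_leaf_gt0 z : star z -> (0 < (val z).2)%N.
Proof. by move=> sz; have := valP z; rewrite /= star_edge_center. Qed.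

Lemma star_edge_leaf_inj : {in star &, injective (fun z : gen n.+1 => (val z).2)}.
Proof.
move=> [[p1 p2] hp] [[q1 q2] hq] /eqP p10 /eqP q10 /= e.
by apply: val_inj; congr pair => //; apply: val_inj; rewrite /= p10 q10.
Qed.

Lemma star_uniq_size (c : word) : all star c -> uniq c -> (size c <= n)%N.
Proof.
move=> sc uc; have uleaves : uniq (ord0 :: [seq (val z).2 | z <- c]).
  rewrite /= map_inj_in_uniq ?uc ?andbT; last first.
    by move=> x y /(allP sc) sx /(allP sc) sy; apply: star_edge_leaf_inj.
  by apply/mapP => -[z /(allP sc) /star_edge_leaf_gt0 + e]; rewrite -e.
by have := max_card (mem (ord0 :: [seq (val z).2 | z <- c]));
  rewrite card_ord (card_uniqP uleaves) /= size_map.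
Qed.

Lemma star_chord_commute (r z : gen n.+1) : star z -> (0 < val (val r).1)%N ->
  (val z).2 != (val r).1 -> (val z).2 != (val r).2 ->
  fk_equiv (monomial k [:: r; z]) (monomial k [:: z; r]).
Proof.
move=> sz r1 zr1 zr2; apply: fk_equiv_commute.
have r2 : (0 < val (val r).2)%N by apply: leq_trans r1 (ltnW (valP r)).
have center_neq (x : 'I_n.+1) : (0 < val x)%N -> x != (val z).1.
  by move=> x0; rewrite -(inj_eq val_inj) star_edge_center // -lt0n.
by split; rewrite 1?center_neq // eq_sym.
Qed.

Lemma star_swap p q : star p -> star q -> p != q ->
  exists (r : gen n.+1) (s : k),
    (forall z, star z -> z != p -> z != q ->
       fk_equiv (monomial k [:: r; z]) (monomial k [:: z; r])) /\
    fk_equiv (monomial k [:: q; p]) (s \*o (monomial k [:: p; r] \- monomial k [:: r; q])).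
Proof.
move=> sp sq pq.
have leaf_neq z x : star z -> star x -> z != x -> (val z).2 != (val x).2.
  by move=> sz sx; apply: contra => /eqP e; apply/eqP; apply: star_edge_leaf_inj.
have center : (val q).1 = (val p).1 by apply: val_inj; rewrite /= !star_edge_center.
case: (ltngtP (val (val p).2) (val (val q).2)) => [lt|gt|e]; last first.
- by case/eqP: pq; apply: star_edge_leaf_inj => //; apply: val_inj.
- pose r : gen n.+1 := exist _ ((val q).2, (val p).2) gt.
  exists r, (-1); split=> [z sz zp zq|].
    by apply: star_chord_commute => //=; [apply: star_edge_leaf_gt0 | apply: leaf_neq..].
  have [_ h] := @fk_equiv_triangle k _ q r p erefl (esym center) erefl.
  by apply: fk_equiv_eq _ _ h => // w /=; ring.
- pose r : gen n.+1 := exist _ ((val p).2, (val q).2) lt.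
  exists r, 1; split=> [z sz zp zq|].
    by apply: star_chord_commute => //=; [apply: star_edge_leaf_gt0 | apply: leaf_neq..].
  have [h _] := @fk_equiv_triangle k _ p r q erefl center erefl.
  by apply: fk_equiv_eq _ _ h => // w /=; rewrite mul1r.
Qed.

Lemma fk_ideal_cyclic_sum (c : word) :
  all star c -> uniq c -> c != [::] -> fk_ideal (cyclic_sum k c).
Proof.
have [N] := ubnP (size c); elim: N c => // N IH [//|a c] /= c_lt.
case/lastP: c c_lt => [_ /andP [sa _] _ _|M b].
  apply: fk_ideal_eq (fk_ideal_square k a) => w.
  by rewrite cyclic_sum_cons /= big_mkord big_ord0 addr0.
rewrite size_rcons all_rcons rcons_uniq mem_rcons inE negb_or ltnS.
move=> size_lt /and3P [sa sb sM] /andP [/andP [ab aM] /andP [bM uM]] _.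
have [r [s [r_comm swap_ba]]] := star_swap sa sb ab.
have r_commutes z : z \in M -> fk_equiv (monomial k [:: r; z]) (monomial k [:: z; r]).
  move=> zM; apply: r_comm; first exact: (allP sM).
    by apply: contraNneq aM => <-.
  by apply: contraNneq bM => <-.
apply: fk_ideal_equiv (cyclic_sum_step swap_ba r_commutes) _.
apply/fk_idealZ/fk_idealB; apply/fk_ideal_sandwich/IH => //=.
- by rewrite sa.
- by rewrite aM.
- by rewrite size_rcons.
- by rewrite all_rcons sb.
- by rewrite rcons_uniq bM.
- by rewrite -size_eq0 size_rcons.
Qed.

End StarGraph.

Lemma uniq_from_no_recurrence (T : eqType) (P : nat -> T -> bool) (x0 : T) i (u : seq T) :
  (forall t, t < size u -> P (i + t) (nth x0 u t))%N ->
  (forall j g x, 0 < g -> i <= j -> j + g < i + size u -> P j x -> ~~ P (j + g) x)%N ->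
  uniq u.
Proof.
move=> Pu norec; apply/(uniqP x0) => s t; rewrite !inE => s_lt t_lt.
wlog st : s t s_lt t_lt / (s <= t)%N.
  by move=> W e; case/orP: (leq_total s t) => ?; [|symmetry]; apply: W.
case: (ltngtP s t) st => // st _ e.
have Ps := Pu s s_lt; rewrite e in Ps.
have /negP[] : ~~ P (i + t)%N (nth x0 u t).
  rewrite (_ : i + t = i + s + (t - s))%N; last by lia.
  by apply: (norec _ _ _ _ _ _ Ps); lia.
exact: Pu.
Qed.

Section WordAction.
Variables (k : closedFieldType) (m : nat) (lam : nat -> gen m -> k).
Local Notation word := (seq (gen m)).

Lemma word_act_cat i (u v : word) :
  word_act lam i (u ++ v) = word_act lam (i + size v) u * word_act lam i v.
Proof.
elim: u => [|x u IH] /=; first by rewrite mul1r.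
by rewrite IH mulrA size_cat [(size u + _)%N]addnC addnA.
Qed.

Lemma word_act_rev x0 i (u : word) :
  word_act lam i (rev u) = \prod_(t < size u) lam (i + t) (nth x0 u t).
Proof.
elim/last_ind: u => [|u x IH]; first by rewrite big_ord0.
rewrite rev_rcons /= IH size_rev size_rcons big_ord_recr /= nth_rcons ltnn eqxx mulrC.
by congr (_ * _); apply: eq_bigr => t _; rewrite nth_rcons ltn_ord.
Qed.

Lemma word_act_rev_neq0 x0 i (u : word) :
  reflect (forall t, (t < size u)%N -> lam (i + t) (nth x0 u t) != 0)
          (word_act lam i (rev u) != 0).
Proof.
rewrite (word_act_rev x0); apply: (iffP (prodf_neq0 _ _)) => h t.
  by move=> t_lt; apply: (h (Ordinal t_lt)).
by move=> _; apply: h.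
Qed.

Lemma word_act_cyclic_window_succ i a (X : word) j : (j < size X)%N ->
  word_act lam i (cyclic_window (a :: X) j.+1) =
  word_act lam (i + j.+2) (drop j X) * (lam (i + j.+1) a * word_act lam i (take j.+1 X)).
Proof. by move=> jX; rewrite /cyclic_window /= word_act_cat /= size_takel // addnS. Qed.

Lemma all_cyclic_window (P : pred (gen m)) (c : word) j :
  all P c -> all P (cyclic_window c j).
Proof.
move=> /allP Pc; rewrite /cyclic_window all_cat; apply/andP.
by split; apply/allP => z z_in; apply: Pc; [apply: mem_drop z_in | apply: mem_take z_in].
Qed.

Definition cyclic_ncpoly (c : word) : ncpoly k m :=
  [seq (1, cyclic_window c j) | j <- index_iota 0 (size c)].

Lemma nccoef_cyclic_ncpoly c : nccoef (cyclic_ncpoly c) =1 cyclic_sum k c.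
Proof. by move=> w; rewrite nccoefE big_map; apply: eq_bigr => j _; rewrite mul1r. Qed.

Lemma size_cyclic_window (c : word) j :
  (j < size c)%N -> size (cyclic_window c j) = (size c).+1.
Proof. by move=> jc; rewrite size_cat size_drop size_take; case: ifP; lia. Qed.

Lemma ncpoly_act_at_cyclic d c i : (i + size c < d)%N ->
  ncpoly_act_at d lam (cyclic_ncpoly c) i (size c).+1 =
  \sum_(0 <= j < size c) word_act lam i (cyclic_window c j).
Proof.
move=> icd; rewrite /ncpoly_act_at big_map big_seq_cond [RHS]big_seq.
apply: eq_big => [j|j /andP [+ _]]; rewrite mem_index_iota => /=.
  by case jc: (j < size c)%N; rewrite //= size_cyclic_window // eqxx.
by move=> jc; rewrite size_cyclic_window // addnS icd mul1r.
Qed.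

Lemma ncpoly_act_at_cyclic_head d i a (es : word) :
  (i + (size es).+1 < d)%N ->
  (forall j, (0 < j <= size es)%N -> lam (i + j) a = 0) ->
  ncpoly_act_at d lam (cyclic_ncpoly (a :: rev es)) i (size es).+2 =
  word_act lam i (rev (rcons (a :: es) a)).
Proof.
move=> icd a_silent; have := ncpoly_act_at_cyclic (d := d) (c := a :: rev es) (i := i).
rewrite /= size_rev => -> //; rewrite big_nat_recl // big_nat_cond.
rewrite big1 ?addr0 => [|j /andP [/andP [_ j_lt] _]].
  by rewrite rev_cons rev_rcons /cyclic_window drop0 take_cons take0 cats1.
by rewrite word_act_cyclic_window_succ ?size_rev // a_silent ?mul0r ?mulr0.
Qed.

End WordAction.

Definition star_acts_at (k : closedFieldType) n (lam : nat -> gen n.+1 -> k) t x :=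
  star_edges n x && (lam t x != 0).

Section NoRecurrence.
Variables (k : closedFieldType) (n d : nat) (lam : nat -> gen n.+1 -> k).
Local Notation star := (star_edges n).
Hypothesis lam_ideal : forall f : ncpoly k n.+1,
  (forall t, t \in f -> all star t.2) -> in_FK_ideal f ->
  forall i j, ncpoly_act_at d lam f i j = 0.
Variables (x0 : gen n.+1) (U : seq (gen n.+1)).
Hypothesis U_acts : forall t, (t < d)%N -> star_acts_at lam t (nth x0 U t).

Lemma no_recurrence g i a : (0 < g)%N -> (i + g < d)%N ->
  star a -> lam i a != 0 -> lam (i + g) a = 0.
Proof.
elim/ltn_ind: g i a => -[//|h] IH i a _ igd sa la; apply/eqP; apply: contraT => lga.
have shorter_gap g' j x : (0 < g' <= h)%N -> (j + g' < d)%N -> star x -> lam j x != 0 ->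
    lam (j + g') x = 0.
  by case/andP => g0 gh; apply: IH.
pose es := mkseq (fun t => nth x0 U (i.+1 + t)) h.
have size_es : size es = h by rewrite size_mkseq.
have es_acts t : (t < h.+1)%N -> star_acts_at lam (i + t) (nth x0 (a :: es) t).
  case: t => [_|t t_lt]; first by rewrite /star_acts_at addn0 sa la.
  by rewrite /= nth_mkseq // addSnnS; apply: U_acts; lia.
have es_star : all star (a :: es).
  by apply/(all_nthP x0) => t; rewrite /= size_es => /es_acts /andP [].
have /andP [a_es es_uniq] : uniq (a :: es).
  apply: (uniq_from_no_recurrence (P := star_acts_at lam) (x0 := x0) (i := i)).
    by move=> t; rewrite /= size_es; apply: es_acts.
  move=> j g x g0 ij; rewrite /= size_es => jg /andP [sx lx].
  by rewrite /star_acts_at shorter_gap ?eqxx ?andbF ?g0 //=; lia.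
have c_ideal : in_FK_ideal (cyclic_ncpoly k (a :: rev es)).
  apply: fk_ideal_eq (fun w => esym (nccoef_cyclic_ncpoly k _ w)) _.
  by apply: fk_ideal_cyclic_sum; rewrite //= ?all_rev ?mem_rev ?rev_uniq ?a_es.
have c_star t : t \in cyclic_ncpoly k (a :: rev es) -> all star t.2.
  by move=> /mapP [j _ ->]; apply: all_cyclic_window; rewrite /= all_rev.
have head_ne0 : word_act lam i (rev (rcons (a :: es) a)) != 0.
  apply/(word_act_rev_neq0 _ x0) => t; rewrite size_rcons nth_rcons /= size_es ltnS.
  case: ltngtP => [t_lt|//|->] _; last exact: lga.
  by have /andP [] := es_acts t t_lt.
have := lam_ideal c_star c_ideal i (size es).+2.
rewrite ncpoly_act_at_cyclic_head ?size_es // => [/eqP|j /andP [j0 jh]].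
  by rewrite (negbTE head_ne0).
by apply: shorter_gap; rewrite ?j0 //=; lia.
Qed.

End NoRecurrence.

Theorem proposition3p3 (k : closedFieldType) (n d : nat) :
  (n.+1 <= d)%N ->
  ~ exists lam : nat -> gen n.+1 -> k,
      is_truncated_point_module (star_edges n) d lam.
Proof.
move=> d_gt [lam [lam_ideal lam_generated]].
have [w [w_star size_w w_act]] := lam_generated d (leqnn d).
case: w => [|x0 w] in w_star size_w w_act *; first by rewrite -size_w in d_gt.
pose U := rev (x0 :: w).
have U_acts t : (t < d)%N -> star_acts_at lam t (nth x0 U t).
  move=> td; rewrite /star_acts_at (all_nthP x0 _ t) ?all_rev ?size_rev ?size_w //=.
  rewrite -[x0 :: w]revK in w_act.
  by move/(word_act_rev_neq0 _ x0): w_act; apply; rewrite size_rev size_w.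
have U_uniq : uniq U.
  apply: (uniq_from_no_recurrence (P := star_acts_at lam) (x0 := x0) (i := 0)).
    by move=> t; rewrite size_rev size_w; apply: U_acts.
  move=> j g x g0 _; rewrite size_rev size_w => jg /andP [sx lx].
  by rewrite /star_acts_at (no_recurrence lam_ideal U_acts) ?eqxx ?andbF.
have U_star : all (star_edges n) U by rewrite all_rev.
by have := star_uniq_size U_star U_uniq; rewrite size_rev size_w leqNgt d_gt.
Qed.
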